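(* Let $p,l$ be integers with $2\le l<p/2$ and $\gcd(p,l)=1$, and let $\vec r:\mathbb{Z}\to\mathbb{R}^2$ be a nondegenerate discrete planar curve with constant centroaffine curvatures $\kappa_k=1$ and $\bar\kappa_k=2\cos\frac{2l\pi}{p}$ for all $k$. Then $\vec r$ is closed with period $p$ and is not simple (it has self-intersections).
   Context: A discrete planar curve is a map $\vec r:\mathbb{Z}\to\mathbb{R}^2$; write $\vec r_k=\vec r(k)$ and $\vec t_k=\vec r_{k+1}-\vec r_k$. $[\vec a,\vec b]$ denotes the $2\times2$ determinant. The curve is nondegenerate if $[\vec t_{k-1},\vec t_k]\ne0$ for all $k$. Its first and second centroaffine curvatures are $\kappa_k=\frac{[\vec t_k,\vec t_{k+1}]}{[\vec t_{k-1},\vec t_k]}$, $\bar\kappa_k=\frac{[\vec t_{k-1},\vec t_{k+1}]}{[\vec t_{k-1},\vec t_k]}$. Closed with period $p$: $\vec r(k+p)=\vec r(k)$ for all $k$, $p$ minimal. Extend $\vec r$ to $\mathbb{R}$ by linear interpolation on each $[k,k+1]$; a closed curve is simple if this map is injective on $[k,k+p)$. *)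

From Stdlib Require Import Reals ZArith.
Open Scope R_scope.

Definition vec := (R * R)%type.
Definition vadd (a b : vec) : vec := (fst a + fst b, snd a + snd b).
Definition vsub (a b : vec) : vec := (fst a - fst b, snd a - snd b).
Definition vscale (c : R) (a : vec) : vec := (c * fst a, c * snd a).
Definition det (a b : vec) : R := fst a * snd b - snd a * fst b.

Definition tangent (r : Z -> vec) (k : Z) : vec := vsub (r (k + 1)%Z) (r k).

Definition nondegenerate (r : Z -> vec) : Prop :=
  forall k : Z, det (tangent r (k - 1)%Z) (tangent r k) <> 0.

Definition kappa (r : Z -> vec) (k : Z) : R :=
  det (tangent r k) (tangent r (k + 1)%Z) / det (tangent r (k - 1)%Z) (tangent r k).

Definition kappabar (r : Z -> vec) (k : Z) : R :=
  det (tangent r (k - 1)%Z) (tangent r (k + 1)%Z) / det (tangent r (k - 1)%Z) (tangent r k).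

Definition closed_with_period (r : Z -> vec) (p : Z) : Prop :=
  (0 < p)%Z /\
  (forall k : Z, r (k + p)%Z = r k) /\
  (forall q : Z, (0 < q < p)%Z -> exists k : Z, r (k + q)%Z <> r k).

(* linear interpolation on each [k, k+1]; Int_part s is the floor of s *)
Definition interp (r : Z -> vec) (s : R) : vec :=
  let k := Int_part s in vadd (r k) (vscale (s - IZR k) (tangent r k)).

Definition simple (r : Z -> vec) (p : Z) : Prop :=
  exists k : Z, forall s1 s2 : R,
    IZR k <= s1 < IZR (k + p) -> IZR k <= s2 < IZR (k + p) ->
    interp r s1 = interp r s2 -> s1 = s2.

From Stdlib Require Import Reals ZArith Lra Lia.
Open Scope R_scope.

(* With theta = 2 l pi / p, Cramer's rule turns kappa = 1 and kappabar = 2 cos theta into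
   the recurrence t_{k+1} = 2 cos theta t_k - t_{k-1} for the tangents. Solving it and
   summing gives r_k = C + cos (k theta) P + sin (k theta) Q with det (P, Q) <> 0 by
   nondegeneracy: r is an affine image of the regular star polygon {p/l}, whose minimal
   period is p since gcd (p, l) = 1. Let j be an inverse of l mod p and psi = pi / p.
   The edges [r_0, r_1] and [r_{j-1}, r_j] are the images of the chords of the unit circle
   from angle 0 to theta and from 2 psi - theta to 2 psi; these are mirror images in the
   line of angle psi, and cross it because 0 < psi < theta - psi < pi. They are different
   edges because l <> 1 mod p. *)

Lemma cos_period_Z (x : R) (n : Z) : cos (x + 2 * IZR n * PI) = cos x.
Proof.
  destruct (Z_le_gt_dec 0 n) as [Hn | Hn].
  - rewrite <- (Z2Nat.id n Hn), <- INR_IZR_INZ. apply cos_period.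
  - rewrite <- (cos_period (x + 2 * IZR n * PI) (Z.to_nat (- n))).
    rewrite INR_IZR_INZ, Z2Nat.id, opp_IZR by lia. f_equal. ring.
Qed.

Lemma sin_period_Z (x : R) (n : Z) : sin (x + 2 * IZR n * PI) = sin x.
Proof.
  destruct (Z_le_gt_dec 0 n) as [Hn | Hn].
  - rewrite <- (Z2Nat.id n Hn), <- INR_IZR_INZ. apply sin_period.
  - rewrite <- (sin_period (x + 2 * IZR n * PI) (Z.to_nat (- n))).
    rewrite INR_IZR_INZ, Z2Nat.id, opp_IZR by lia. f_equal. ring.
Qed.

Lemma cos_eq_1_multiple (x : R) : cos x = 1 -> exists m : Z, x = 2 * IZR m * PI.
Proof.
  intro Hx. replace x with (2 * (x / 2)) in Hx by field.
  rewrite cos_2a_sin in Hx.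
  assert (Hs : sin (x / 2) = 0) by nra.
  destruct (sin_eq_0_0 _ Hs) as [m Hm]. exists m.
  replace (2 * IZR m * PI) with (2 * (IZR m * PI)) by ring. rewrite <- Hm. field.
Qed.

Lemma sin_frac_PI_pos (n p : Z) : (0 < n < p)%Z -> 0 < sin (IZR n * PI / IZR p).
Proof.
  intro Hnp. pose proof PI_RGT_0 as Hpi.
  assert (Hn : 0 < IZR n) by (apply IZR_lt; lia).
  assert (Hlt : IZR n < IZR p) by (apply IZR_lt; lia).
  apply sin_gt_0.
  - apply Rdiv_lt_0_compat; nra.
  - apply (Rmult_lt_reg_r (IZR p)); [lra |].
    unfold Rdiv. rewrite Rmult_assoc, Rinv_l by lra. nra.
Qed.

Lemma periodic_mul {A : Type} (f : Z -> A) (p : Z) :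
  (forall k, f (k + p)%Z = f k) -> forall m k, f (k + m * p)%Z = f k.
Proof.
  intros Hf m. induction m as [| m IHm | m IHm] using Z.peano_ind; intro k.
  - now rewrite Z.mul_0_l, Z.add_0_r.
  - rewrite Z.mul_succ_l, Z.add_assoc, Hf. apply IHm.
  - rewrite <- (IHm k), <- (Hf (k + Z.pred m * p)%Z). f_equal. rewrite Z.mul_pred_l; ring.
Qed.

Lemma step_invariant_const (h : Z -> R) :
  (forall k, h (k + 1)%Z = h k) -> forall k, h k = h 0%Z.
Proof.
  intros Hh k. rewrite <- (periodic_mul h 1 Hh k 0). f_equal. ring.
Qed.

Lemma rec2_unique (c : R) (f g : Z -> R) :
  (forall k, f (k + 1)%Z = c * f k - f (k - 1)%Z) ->
  (forall k, g (k + 1)%Z = c * g k - g (k - 1)%Z) ->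
  f 0%Z = g 0%Z -> f 1%Z = g 1%Z -> forall k, f k = g k.
Proof.
  intros Hf Hg H0 H1.
  enough (Hpair : forall k, f k = g k /\ f (k + 1)%Z = g (k + 1)%Z) by apply Hpair.
  induction k as [| k [Ek Ek1] | k [Ek Ek1]] using Z.peano_ind.
  - split; assumption.
  - unfold Z.succ. split; [exact Ek1 |].
    rewrite Hf, Hg, Z.add_simpl_r, Ek, Ek1. reflexivity.
  - unfold Z.pred. replace (k + -1 + 1)%Z with k by ring. split; [| exact Ek].
    pose proof (Hf k) as Fk. pose proof (Hg k) as Gk.
    rewrite Ek, Ek1 in Fk. replace (k + -1)%Z with (k - 1)%Z by ring. lra.
Qed.

Section TrigRecurrence.

Variable theta : R.

Definition trig_comb (a b : R) (k : Z) : R :=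
  cos (IZR k * theta) * a + sin (IZR k * theta) * b.

Lemma trig_comb_rec (a b : R) (k : Z) :
  trig_comb a b (k + 1) = 2 * cos theta * trig_comb a b k - trig_comb a b (k - 1).
Proof.
  unfold trig_comb. rewrite plus_IZR, minus_IZR.
  replace ((IZR k + 1) * theta) with (IZR k * theta + theta) by ring.
  replace ((IZR k - 1) * theta) with (IZR k * theta - theta) by ring.
  rewrite cos_plus, cos_minus, sin_plus, sin_minus. ring.
Qed.

Lemma rec2_trig_comb (f : Z -> R) :
  sin theta <> 0 -> (forall k, f (k + 1)%Z = 2 * cos theta * f k - f (k - 1)%Z) ->
  exists a b, forall k, f k = trig_comb a b k.
Proof.
  intros Hs Hf. exists (f 0%Z), ((f 1%Z - cos theta * f 0%Z) / sin theta).
  apply (rec2_unique (2 * cos theta)); [exact Hf | apply trig_comb_rec | |];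
    unfold trig_comb; rewrite ?Rmult_0_l, ?Rmult_1_l, ?cos_0, ?sin_0; field; exact Hs.
Qed.

Lemma trig_comb_antidiff (a b : R) : cos theta <> 1 ->
  exists P Q, forall k, trig_comb P Q (k + 1) - trig_comb P Q k = trig_comb a b k.
Proof.
  intro Hc. pose proof (sin2_cos2 theta) as Hpy. unfold Rsqr in Hpy.
  assert (Hd : 2 - 2 * cos theta <> 0) by lra.
  set (P := ((cos theta - 1) * a - sin theta * b) / (2 - 2 * cos theta)).
  set (Q := (sin theta * a + (cos theta - 1) * b) / (2 - 2 * cos theta)).
  (* (P, Q) solves the 2x2 system of determinant (cos theta - 1)^2 + sin^2 theta *)
  assert (Ea : (cos theta - 1) * P + sin theta * Q = a).
  { apply (Rmult_eq_reg_r (2 - 2 * cos theta)); [| exact Hd].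
    unfold P, Q. field_simplify; [| exact Hd].
    replace (sin theta ^ 2) with (1 - cos theta ^ 2) by lra. ring. }
  assert (Eb : - sin theta * P + (cos theta - 1) * Q = b).
  { apply (Rmult_eq_reg_r (2 - 2 * cos theta)); [| exact Hd].
    unfold P, Q. field_simplify; [| exact Hd].
    replace (sin theta ^ 2) with (1 - cos theta ^ 2) by lra. ring. }
  exists P, Q. intro k. unfold trig_comb. rewrite plus_IZR.
  replace ((IZR k + 1) * theta) with (IZR k * theta + theta) by ring.
  rewrite cos_plus, sin_plus, <- Ea, <- Eb. ring.
Qed.

Lemma antidiff_trig_comb (g : Z -> R) (a b : R) : cos theta <> 1 ->
  (forall k, g (k + 1)%Z - g k = trig_comb a b k) ->
  exists C P Q, forall k, g k = C + trig_comb P Q k.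
Proof.
  intros Hc Hg. destruct (trig_comb_antidiff a b Hc) as (P & Q & HPQ).
  set (h k := g k - trig_comb P Q k).
  assert (Hh : forall k, h (k + 1)%Z = h k).
  { intro k. unfold h. pose proof (Hg k). pose proof (HPQ k). lra. }
  exists (h 0%Z), P, Q. intro k. rewrite <- (step_invariant_const h Hh k). unfold h. ring.
Qed.

End TrigRecurrence.

Definition lin (P Q w : vec) : vec := vadd (vscale (fst w) P) (vscale (snd w) Q).
Definition aff (C P Q w : vec) : vec := vadd C (lin P Q w).
Definition unit_vec (x : R) : vec := (cos x, sin x).
Definition edge_point (u v : vec) (s : R) : vec := vadd u (vscale s (vsub v u)).

Ltac vec_unfold := unfold aff, lin, edge_point, vadd, vsub, vscale, det; cbn [fst snd].
Ltac vec_ring := vec_unfold; f_equal; ring.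

Lemma vsub_aff (C P Q u v : vec) : vsub (aff C P Q u) (aff C P Q v) = lin P Q (vsub u v).
Proof. vec_ring. Qed.

Lemma edge_point_aff (C P Q u v : vec) (s : R) :
  edge_point (aff C P Q u) (aff C P Q v) s = aff C P Q (edge_point u v s).
Proof. vec_ring. Qed.

Lemma det_lin (P Q u v : vec) : det (lin P Q u) (lin P Q v) = det u v * det P Q.
Proof. vec_unfold. ring. Qed.

Lemma aff_inj (C P Q u v : vec) : det P Q <> 0 -> aff C P Q u = aff C P Q v -> u = v.
Proof.
  intros HPQ Huv. set (du := vsub (aff C P Q u) (aff C P Q v)).
  assert (Hdu : du = (0, 0)) by (unfold du; rewrite Huv; vec_ring).
  assert (E1 : (fst u - fst v) * det P Q = fst du * snd Q - snd du * fst Q)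
    by (unfold du; vec_unfold; ring).
  assert (E2 : (snd u - snd v) * det P Q = snd du * fst P - fst du * snd P)
    by (unfold du; vec_unfold; ring).
  rewrite Hdu in E1, E2. cbn [fst snd] in E1, E2.
  destruct u as [u1 u2], v as [v1 v2]. cbn [fst snd] in E1, E2.
  f_equal; apply Rminus_diag_uniq, (Rmult_eq_reg_r (det P Q)); auto; lra.
Qed.

Lemma unit_vec_period_Z (x : R) (n : Z) : unit_vec (x + 2 * IZR n * PI) = unit_vec x.
Proof. unfold unit_vec. now rewrite cos_period_Z, sin_period_Z. Qed.

Lemma vec_of_dets (u v w : vec) (c : R) : det u v <> 0 ->
  det v w = det u v -> det u w = c * det u v -> w = vsub (vscale c v) u.
Proof.
  intros HD Hvw Huw.
  (* Cramer: det(u, v) w = det(w, v) u + det(u, w) v *)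
  assert (E1 : det u v * fst w = det u v * (c * fst v - fst u)).
  { transitivity (- det v w * fst u + det u w * fst v); [unfold det; ring |].
    rewrite Hvw, Huw. ring. }
  assert (E2 : det u v * snd w = det u v * (c * snd v - snd u)).
  { transitivity (- det v w * snd u + det u w * snd v); [unfold det; ring |].
    rewrite Hvw, Huw. ring. }
  destruct w as [w1 w2]. unfold vsub, vscale. cbn [fst snd] in *.
  f_equal; eapply Rmult_eq_reg_l; eassumption.
Qed.

Lemma tangent_recurrence (r : Z -> vec) (c : R) :
  nondegenerate r -> (forall k, kappa r k = 1) -> (forall k, kappabar r k = c) ->
  forall k, tangent r (k + 1)%Z = vsub (vscale c (tangent r k)) (tangent r (k - 1)%Z).
Proof.
  intros Hnd Hk Hkb k. apply vec_of_dets; [exact (Hnd k) | |].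
  - rewrite <- (Rmult_1_l (det _ (tangent r k))), <- (Hk k). unfold kappa. field. exact (Hnd k).
  - rewrite <- (Hkb k). unfold kappabar. field. exact (Hnd k).
Qed.

Lemma nondegenerate_aff_det (r : Z -> vec) (C P Q : vec) (w : Z -> vec) :
  nondegenerate r -> (forall k, r k = aff C P Q (w k)) -> det P Q <> 0.
Proof.
  intros Hnd Hr HPQ. apply (Hnd 0%Z).
  unfold tangent. rewrite !Hr, !vsub_aff, det_lin, HPQ. ring.
Qed.

Lemma constant_curvature_affine_polygon (r : Z -> vec) (theta : R) :
  sin theta <> 0 -> nondegenerate r ->
  (forall k, kappa r k = 1) -> (forall k, kappabar r k = 2 * cos theta) ->
  exists C P Q, det P Q <> 0 /\
    forall k, r k = aff C P Q (unit_vec (IZR k * theta)).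
Proof.
  intros Hs Hnd Hk Hkb.
  assert (Hc : cos theta <> 1).
  { intro E. pose proof (sin2_cos2 theta) as Hpy. unfold Rsqr in Hpy. rewrite E in Hpy. nra. }
  pose proof (tangent_recurrence r _ Hnd Hk Hkb) as Hrec.
  destruct (rec2_trig_comb theta (fun k => fst (tangent r k)) Hs) as (a1 & b1 & Ht1).
  { intro k. now rewrite Hrec. }
  destruct (rec2_trig_comb theta (fun k => snd (tangent r k)) Hs) as (a2 & b2 & Ht2).
  { intro k. now rewrite Hrec. }
  destruct (antidiff_trig_comb theta (fun k => fst (r k)) a1 b1 Hc) as (C1 & P1 & Q1 & Hr1).
  { exact Ht1. }
  destruct (antidiff_trig_comb theta (fun k => snd (r k)) a2 b2 Hc) as (C2 & P2 & Q2 & Hr2).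
  { exact Ht2. }
  assert (Hr : forall k, r k = aff (C1, C2) (P1, P2) (Q1, Q2) (unit_vec (IZR k * theta))).
  { intro k. rewrite (surjective_pairing (r k)), Hr1, Hr2.
    unfold trig_comb, unit_vec. vec_ring. }
  exists (C1, C2), (P1, P2), (Q1, Q2). split; [| exact Hr].
  exact (nondegenerate_aff_det r _ _ _ _ Hnd Hr).
Qed.

Definition star_angle (p l : Z) : R := 2 * IZR l * PI / IZR p.

Lemma star_angle_shift (p l k m : Z) : (p <> 0)%Z ->
  IZR (k + m * p) * star_angle p l = IZR k * star_angle p l + 2 * IZR (m * l) * PI.
Proof.
  intro Hp. apply not_0_IZR in Hp. unfold star_angle.
  rewrite plus_IZR, !mult_IZR. field. exact Hp.
Qed.

Lemma affine_star_polygon_closed (p l : Z) (C P Q : vec) (r : Z -> vec) :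
  (0 < p)%Z -> Z.gcd p l = 1%Z -> det P Q <> 0 ->
  (forall k, r k = aff C P Q (unit_vec (IZR k * star_angle p l))) ->
  closed_with_period r p.
Proof.
  intros Hp Hg HPQ Hr. split; [exact Hp | split].
  - intro k. rewrite !Hr, <- (Z.mul_1_l p) at 1.
    rewrite star_angle_shift, unit_vec_period_Z by lia. reflexivity.
  - intros q Hq. exists 0%Z. rewrite !Hr, Z.add_0_l. intro Haff.
    apply aff_inj, (f_equal fst) in Haff; [| exact HPQ].
    cbn [unit_vec fst] in Haff. rewrite Rmult_0_l, cos_0 in Haff.
    destruct (cos_eq_1_multiple _ Haff) as [m Hm].
    assert (Hqlm : (q * l = m * p)%Z).
    { apply eq_IZR. rewrite !mult_IZR.
      assert (0 < IZR p) by (apply IZR_lt; lia). pose proof PI_RGT_0.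
      apply (Rmult_eq_reg_r (2 * PI / IZR p)); [| apply Rgt_not_eq, Rdiv_lt_0_compat; lra].
      unfold star_angle in Hm. transitivity (IZR q * (2 * IZR l * PI / IZR p)).
      - field. lra.
      - rewrite Hm. field. lra. }
    assert (Hpq : (p | q)%Z) by (apply (Z.gauss p l q); [exists m; lia | exact Hg]).
    apply Z.divide_pos_le in Hpq; lia.
Qed.

Lemma unit_chords_cross (psi phi : R) : sin psi + sin phi <> 0 ->
  edge_point (unit_vec 0) (unit_vec (psi + phi)) (sin psi / (sin psi + sin phi)) =
  edge_point (unit_vec (psi - phi)) (unit_vec (2 * psi)) (1 - sin psi / (sin psi + sin phi)).
Proof.
  intro Hd. pose proof (sin2_cos2 psi) as Hpy. unfold Rsqr in Hpy.
  unfold unit_vec. vec_unfold.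
  rewrite cos_0, sin_0, cos_2a, sin_2a, cos_plus, sin_plus, cos_minus, sin_minus.
  f_equal; apply (Rmult_eq_reg_r (sin psi + sin phi)); try exact Hd;
    field_simplify; try exact Hd;
    replace (cos psi ^ 2) with (1 - sin psi ^ 2) by lra; ring.
Qed.

Lemma interp_edge (r : Z -> vec) (a : Z) (s : R) : 0 <= s < 1 ->
  interp r (IZR a + s) = edge_point (r a) (r (a + 1)%Z) s.
Proof.
  intro Hs. unfold interp.
  rewrite <- (proj1 (Int_part_frac_part_spec _ a s Hs eq_refl)).
  replace (IZR a + s - IZR a) with s by ring. reflexivity.
Qed.

Lemma Z_window_rep (p k a : Z) : (0 < p)%Z -> exists m, (k <= a + m * p < k + p)%Z.
Proof.
  intro Hp. exists (- ((a - k) / p))%Z.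
  pose proof (Z.div_mod (a - k) p ltac:(lia)).
  pose proof (Z.mod_pos_bound (a - k) p Hp). lia.
Qed.

Lemma IZR_window (k p n : Z) (s : R) : (k <= n < k + p)%Z -> 0 <= s < 1 ->
  IZR k <= IZR n + s < IZR (k + p).
Proof.
  intros Hn Hs.
  assert (IZR k <= IZR n) by (apply IZR_le; lia).
  assert (IZR (n + 1) <= IZR (k + p)) by (apply IZR_le; lia).
  rewrite !plus_IZR in *. change (IZR 1) with 1 in *. lra.
Qed.

Lemma not_simple_of_crossing_edges (r : Z -> vec) (p a b : Z) (s t : R) :
  (0 < p)%Z -> (forall k, r (k + p)%Z = r k) -> (a mod p <> b mod p)%Z ->
  0 <= s < 1 -> 0 <= t < 1 ->
  edge_point (r a) (r (a + 1)%Z) s = edge_point (r b) (r (b + 1)%Z) t ->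
  ~ simple r p.
Proof.
  intros Hp Hper Hab Hs Ht Hcross [k Hinj].
  destruct (Z_window_rep p k a Hp) as [ma Ha].
  destruct (Z_window_rep p k b Hp) as [mb Hb].
  assert (Heq : IZR (a + ma * p) + s = IZR (b + mb * p) + t).
  { apply Hinj; [now apply IZR_window .. |].
    rewrite !interp_edge by assumption.
    replace (a + ma * p + 1)%Z with (a + 1 + ma * p)%Z by ring.
    replace (b + mb * p + 1)%Z with (b + 1 + mb * p)%Z by ring.
    rewrite !(periodic_mul r p Hper). exact Hcross. }
  apply Hab. rewrite <- (Z_mod_plus_full a ma p), <- (Z_mod_plus_full b mb p).
  f_equal. rewrite (proj1 (Int_part_frac_part_spec _ _ s Hs eq_refl)), Heq.
  symmetry. exact (proj1 (Int_part_frac_part_spec _ _ t Ht eq_refl)).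
Qed.

Lemma bezout_inverse_not_one (p l u j : Z) : (2 <= l < p)%Z -> (u * p + j * l = 1)%Z ->
  (0 mod p <> (j - 1) mod p)%Z.
Proof.
  intros Hl Hb Hj. rewrite Z.mod_0_l in Hj by lia.
  symmetry in Hj. apply Z.mod_divide in Hj as [n Hn]; [| lia].
  (* j = 1 mod p forces l = 1 mod p *)
  assert (Hw : (p * (u + n * l) = 1 - l)%Z) by nia.
  destruct (Z_lt_le_dec (u + n * l) 0); nia.
Qed.

Lemma affine_star_polygon_not_simple (p l : Z) (C P Q : vec) (r : Z -> vec) :
  (2 <= l)%Z -> (2 * l < p)%Z -> Z.gcd p l = 1%Z ->
  (forall k, r k = aff C P Q (unit_vec (IZR k * star_angle p l))) ->
  (forall k, r (k + p)%Z = r k) -> ~ simple r p.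
Proof.
  intros Hl Hlp Hg Hr Hper.
  destruct (Z.gcd_bezout p l 1 Hg) as (u & j & Hb).
  assert (Hpr : 0 < IZR p) by (apply IZR_lt; lia).
  set (psi := PI / IZR p). set (phi := star_angle p l - psi).
  assert (Hspsi : 0 < sin psi).
  { unfold psi. rewrite <- (Rmult_1_l PI). apply sin_frac_PI_pos. lia. }
  assert (Hsphi : 0 < sin phi).
  { replace phi with (IZR (2 * l - 1) * PI / IZR p).
    - apply sin_frac_PI_pos. lia.
    - unfold phi, psi, star_angle. rewrite minus_IZR, mult_IZR. field. lra. }
  assert (Hj : IZR j * star_angle p l = 2 * psi + 2 * IZR (- u) * PI).
  { apply (f_equal IZR) in Hb. rewrite plus_IZR, !mult_IZR in Hb.
    unfold psi, star_angle. rewrite opp_IZR.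
    replace (IZR j * (2 * IZR l * PI / IZR p)) with (2 * PI * (IZR j * IZR l) / IZR p)
      by (field; lra).
    replace (IZR j * IZR l) with (1 - IZR u * IZR p) by (change (IZR 1) with 1 in Hb; lra).
    field. lra. }
  set (s := sin psi / (sin psi + sin phi)).
  assert (Hs : 0 < s < 1).
  { unfold s. split; [apply Rdiv_lt_0_compat; lra |].
    apply (Rmult_lt_reg_r (sin psi + sin phi)); [lra |]. field_simplify; lra. }
  apply (not_simple_of_crossing_edges r p 0 (j - 1) s (1 - s)); try lra.
  - lia.
  - exact Hper.
  - apply (bezout_inverse_not_one p l u j); lia.
  - rewrite !Hr, !edge_point_aff. f_equal.
    replace (j - 1 + 1)%Z with j by ring.
    rewrite Rmult_0_l, minus_IZR, Rmult_minus_distr_r, Hj.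
    replace (2 * psi + 2 * IZR (- u) * PI - 1 * star_angle p l)
      with (psi - phi + 2 * IZR (- u) * PI) by (unfold phi; ring).
    rewrite !unit_vec_period_Z, Z.add_0_l, Rmult_1_l.
    replace (star_angle p l) with (psi + phi) by (unfold phi; ring).
    apply unit_chords_cross. lra.
Qed.

Theorem proposition3p13 (p l : Z) (r : Z -> vec) :
  (2 <= l)%Z -> (2 * l < p)%Z -> Z.gcd p l = 1%Z ->
  nondegenerate r ->
  (forall k : Z, kappa r k = 1) ->
  (forall k : Z, kappabar r k = 2 * cos (2 * IZR l * PI / IZR p)) ->
  closed_with_period r p /\ ~ simple r p.
Proof.
  intros Hl Hlp Hg Hnd Hk Hkb.
  assert (Hsin : sin (star_angle p l) <> 0).
  { apply Rgt_not_eq. unfold star_angle. rewrite <- mult_IZR. apply sin_frac_PI_pos. lia. }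
  destruct (constant_curvature_affine_polygon r _ Hsin Hnd Hk Hkb) as (C & P & Q & HPQ & Hr).
  assert (Hclosed : closed_with_period r p).
  { apply (affine_star_polygon_closed p l C P Q); auto. lia. }
  split; [exact Hclosed |].
  apply (affine_star_polygon_not_simple p l C P Q); auto.
  exact (proj1 (proj2 Hclosed)).
Qed.
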